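(* Let $\{e_i\}_{i=1}^N$ be the standard orthonormal basis of $\mathcal H_N=\ell_2(N)$, and let $P,Q$ be orthogonal projections of rank $M$ on $\mathcal H_N$. Suppose $\{f_i\}_{i=1}^N$ is a Parseval frame for an $M$-dimensional Hilbert space $\mathcal H_M$ whose analysis operator $T$ satisfies $Tf_i=Pe_i$ for all $i=1,\dots,N$. If \[\sum_{i=1}^N\|Pe_i-Qe_i\|^2<\epsilon,\] then there is a Parseval frame $\{g_i\}_{i=1}^N$ for $\mathcal H_M$ whose analysis operator $T_1$ satisfies $T_1g_i=Qe_i$ for all $i=1,\dots,N$, and \[\sum_{i=1}^N\|f_i-g_i\|^2<2\epsilon.\] Moreover, if $\{Qe_i\}_{i=1}^N$ is equal norm (i.e. $\|Qe_i\|$ is independent of $i$), then $\{g_i\}_{i=1}^N$ can be chosen to be equal norm.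
   Context: A family $\{f_i\}_{i=1}^N$ in $\mathcal H_M$ is a Parseval frame if $\sum_{i=1}^N|\langle f,f_i\rangle|^2=\|f\|^2$ for all $f\in\mathcal H_M$. Its analysis operator is $T:\mathcal H_M\to\ell_2(N)$, $T(f)=\sum_{i=1}^N\langle f,f_i\rangle e_i$. A frame is equal norm if all $\|f_i\|$ are equal. *)

(* Scalars: an arbitrary numClosedFieldType C (e.g. algC),
   i.e. the complex setting; H_K is modelled as the row space 'rV[C]_K with
   the standard inner product <u,v> = \sum_j u_j (v_j)^*. *)
From HB Require Import structures.
From mathcomp Require Import all_boot all_order all_algebra.
Set Implicit Arguments. Unset Strict Implicit. Unset Printing Implicit Defensive.
Import Order.TTheory GRing.Theory Num.Theory.
Local Open Scope ring_scope.

Section FrameDefs.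
Variable C : numClosedFieldType.

Definition dotv n (u v : 'rV[C]_n) : C := \sum_(j < n) u 0 j * (v 0 j)^*.

Definition normsq n (u : 'rV[C]_n) : C := \sum_(j < n) `|u 0 j| ^+ 2.

Definition normv n (u : 'rV[C]_n) : C := sqrtC (normsq u).

Definition stdb N (i : 'I_N) : 'rV[C]_N := delta_mx 0 i.

Definition mxapp N (A : 'M[C]_N) (v : 'rV[C]_N) : 'rV[C]_N := (A *m v^T)^T.

Definition adjmx m n (A : 'M[C]_(m, n)) : 'M[C]_(n, m) := map_mx (@Num.conj C) A^T.

Definition orth_proj N (A : 'M[C]_N) : Prop := A *m A = A /\ adjmx A = A.

Definition parseval_frame N M (f : 'I_N -> 'rV[C]_M) : Prop :=
  forall x : 'rV[C]_M, \sum_(i < N) `|dotv x (f i)| ^+ 2 = normsq x.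

Definition analysis N M (f : 'I_N -> 'rV[C]_M) (x : 'rV[C]_M) : 'rV[C]_N :=
  \row_(i < N) dotv x (f i).

Definition equal_norm N n (f : 'I_N -> 'rV[C]_n) : Prop :=
  forall i j, normv (f i) = normv (f j).

End FrameDefs.

(** Let F be the N x M matrix with rows f_i, so that F F^* = P^T, and factor
    Q^T = S^* S with S S^* = 1.  Write the M x M matrix S F = U diag(s) V in
    singular value form and put G = S^* U V: then G^* G = 1 and G G^* = Q^T,
    so the rows of G form the required Parseval frame, equal norm when the
    Q e_i are since their norms are the diagonal entries of Q^T.  Expanding
    the Frobenius norms gives
      |F - G|^2 = tr P + M - 2 sum_j s_j,
      |P - Q|^2 = tr P + M - 2 sum_j s_j^2,
    and 0 <= s_j <= 1 because S F is a product of contractions, so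
    |F - G|^2 <= |P - Q|^2 < eps. *)

From HB Require Import structures.
From mathcomp Require Import all_boot all_order all_algebra.
Set Implicit Arguments. Unset Strict Implicit. Unset Printing Implicit Defensive.
Import Order.TTheory GRing.Theory Num.Theory.
Local Open Scope ring_scope.
Local Open Scope sesquilinear_scope.

Section Adjoint.
Variable C : numClosedFieldType.

Lemma trmxC_mul m n p (A : 'M[C]_(m, n)) (B : 'M[C]_(n, p)) :
  (A *m B)^t* = B^t* *m A^t*.
Proof. by rewrite trmx_mul map_mxM. Qed.

Lemma trmxCD m n (A B : 'M[C]_(m, n)) : (A + B)^t* = A^t* + B^t*.
Proof. by rewrite linearD map_mxD. Qed.

Lemma trmxCB m n (A B : 'M[C]_(m, n)) : (A - B)^t* = A^t* - B^t*.
Proof. by rewrite linearB map_mxB. Qed.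

Lemma trmxC1 n : (1%:M : 'M[C]_n)^t* = 1%:M.
Proof. by rewrite trmx1 map_mx1. Qed.

Lemma trmxC_diag n (d : 'rV[C]_n) :
  (diag_mx d)^t* = diag_mx (map_mx (@Num.conj C) d).
Proof. by rewrite tr_diag_mx map_diag_mx. Qed.

Lemma mxtrace_trmxC n (A : 'M[C]_n) : \tr (A^t*) = (\tr A)^*.
Proof. by rewrite /mxtrace rmorph_sum; apply: eq_bigr => i _; rewrite !mxE. Qed.

Lemma diag_mxM n (a b : 'rV[C]_n) :
  diag_mx a *m diag_mx b = diag_mx (\row_j (a 0 j * b 0 j)).
Proof. by rewrite mul_diag_mx; apply/matrixP => i j; rewrite !mxE mulrnAr. Qed.

Lemma mul_trmxC_diagE m n (X : 'M[C]_(m, n)) i :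
  (X *m X^t*) i i = \sum_j `|X i j| ^+ 2.
Proof. by rewrite mxE; apply: eq_bigr => j _; rewrite !mxE normCK. Qed.

Lemma mul_trmxC_diag_ge0 m n (X : 'M[C]_(m, n)) i : 0 <= (X *m X^t*) i i.
Proof. by rewrite mul_trmxC_diagE sumr_ge0 // => j _; rewrite exprn_ge0. Qed.

Lemma mxtrace_mul_trmxC_ge0 m n (X : 'M[C]_(m, n)) : 0 <= \tr (X *m X^t*).
Proof. by apply: sumr_ge0 => i _; apply: mul_trmxC_diag_ge0. Qed.

Lemma trmxC_mul_eq0 m n (X : 'M[C]_(m, n)) : X^t* *m X = 0 -> X = 0.
Proof.
move=> /(congr1 mxtrace); rewrite mxtrace_mulC mxtrace0 /mxtrace => /eqP.
rewrite psumr_eq0 => [/allP X0|i _]; last exact: mul_trmxC_diag_ge0.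
apply/matrixP => i j; rewrite mxE; apply/eqP.
move: (X0 i (mem_index_enum _)); rewrite /= mul_trmxC_diagE.
rewrite psumr_eq0 => [/allP/(_ j (mem_index_enum _))|k _]; last first.
  exact: exprn_ge0.
by rewrite /= sqrf_eq0 normr_eq0.
Qed.

Lemma gram_mulmx_eq0 m n p (Y : 'M[C]_(m, n)) (B : 'M[C]_(n, p)) :
  Y^t* *m Y *m B = 0 -> Y *m B = 0.
Proof.
move=> YYB; apply: trmxC_mul_eq0.
by rewrite trmxC_mul -mulmxA (mulmxA (Y^t*)) YYB mulmx0.
Qed.

Lemma unitarymx_trmxC_mul n (U : 'M[C]_n) : U \is unitarymx -> U^t* *m U = 1%:M.
Proof. by move=> Uu; rewrite -[U^t*]mul1mx mulmxKtV. Qed.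

Lemma mxtrace_mul_trmxCB m n (X Y : 'M[C]_(m, n)) :
  \tr ((X - Y) *m (X - Y)^t*) =
  \tr (X *m X^t*) - \tr (X *m Y^t*) - \tr (Y *m X^t*) + \tr (Y *m Y^t*).
Proof. by rewrite trmxCB mulmxBl !mulmxBr !raddfB /= opprK addrA. Qed.

End Adjoint.

Section Projections.
Variable C : numClosedFieldType.

Lemma orth_proj_trmx n (X : 'M[C]_n) : orth_proj X -> orth_proj X^T.
Proof.
move=> [XX Xh]; split; first by rewrite -trmx_mul XX.
move/matrixP: Xh => Xh; apply/matrixP => i j.
by rewrite !mxE -[RHS]Xh !mxE.
Qed.

Lemma orth_proj1B n (X : 'M[C]_n) : orth_proj X -> orth_proj (1%:M - X).
Proof.
move=> [XX Xh]; split; last by rewrite [adjmx _]trmxCB trmxC1 [X^t*]Xh.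
by rewrite mulmxBl mul1mx mulmxBr mulmx1 XX subrr subr0.
Qed.

Lemma orth_proj_factor n k (X : 'M[C]_n) : orth_proj X -> \rank X = k ->
  exists2 S : 'M[C]_(k, n), S \is unitarymx & S^t* *m S = X.
Proof.
move=> [XX Xh] <-.
have Su : schmidt (row_base X) \is unitarymx.
  exact/schmidt_unitarymx/rank_leq_col.
have SX : (schmidt (row_base X) :=: X)%MS.
  exact: eqmx_trans (eqmx_schmidt_free (row_base_free X)) (eq_row_base X).
move: (schmidt _) Su SX; move: (\rank X) => r S Su SX; exists S => //.
have /submxP [D XD] : (X <= S)%MS by rewrite SX.
have /submxP [D' SD] : (S <= X)%MS by rewrite SX.
have SXS : S *m X = S by rewrite SD -mulmxA XX.
have XSS : X *m S^t* *m S = X.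
  by rewrite {1}XD -!mulmxA (mulmxA S) (unitarymxP Su) mul1mx.
by rewrite -{1}SXS trmxC_mul [X^t*]Xh XSS.
Qed.

Lemma mxtrace_orth_proj n (X : 'M[C]_n) : orth_proj X -> \tr X = (\rank X)%:R.
Proof.
move=> PX; have [S /unitarymxP SS SSX] := orth_proj_factor PX (erefl _).
by rewrite -{1}SSX mxtrace_mulC SS mxtrace_scalar.
Qed.

Lemma orth_proj_diag_le m n (B : 'M[C]_(m, n)) X i : orth_proj X ->
  (B *m X *m B^t*) i i <= (B *m B^t*) i i.
Proof.
move=> PX; have [XX Xh] := orth_proj1B PX; set Y := B *m (1%:M - X).
have -> : B *m B^t* = B *m X *m B^t* + Y *m Y^t*.
  rewrite /Y trmxC_mul [(1%:M - X)^t*]Xh !mulmxA -(mulmxA B _ (1%:M - X)) XX.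
  by rewrite -mulmxDl -mulmxDr addrC subrK mulmx1.
by rewrite [Z in _ <= Z]mxE lerDl mul_trmxC_diag_ge0.
Qed.

End Projections.

Section Isometries.
Variable C : numClosedFieldType.

Lemma partial_isometry_unitary_ext n (Y E : 'M[C]_n) :
  orth_proj E -> Y^t* *m Y = E -> exists2 U, U \is unitarymx & U *m E = Y.
Proof.
move=> PE YYE; have [EE _] := PE.
have EJ : E *m (1%:M - E) = 0 by rewrite mulmxBr mulmx1 EE subrr.
have YJ : Y *m (1%:M - E) = 0 by apply: gram_mulmx_eq0; rewrite YYE.
have YE : Y *m E = Y.
  by move/eqP: YJ; rewrite mulmxBr mulmx1 subr_eq0 => /eqP <-.
set J := 1%:M - E; set R := 1%:M - Y *m Y^t*.
have PJ : orth_proj J := orth_proj1B PE.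
have PR : orth_proj R.
  apply: orth_proj1B; split; last by rewrite /adjmx trmxC_mul trmxCK.
  by rewrite mulmxA -(mulmxA Y) YYE YE.
(* The complements 1 - E and 1 - Y Y^* of the initial and final spaces have
   equal traces, hence equal ranks, so one can be mapped isometrically onto
   the other. *)
have rkRJ : \rank R = \rank J.
  apply/eqP; rewrite -(eqr_nat C) -!mxtrace_orth_proj //.
  by rewrite !linearB /= mxtrace_mulC YYE.
have [k rkJ] : exists k, \rank J = k by exists (\rank J).
rewrite rkJ in rkRJ.
have [SJ /unitarymxP SJu SJJ] := orth_proj_factor PJ rkJ.
have [SR /unitarymxP SRu SRR] := orth_proj_factor PR rkRJ.
have SR_Y : SR *m Y = 0.
  have -> : SR = SR *m R by rewrite -SRR mulmxA SRu mul1mx.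
  by rewrite -mulmxA mulmxBl mul1mx -mulmxA YYE YE subrr mulmx0.
have SJ_E : SJ *m E = 0.
  have -> : SJ = SJ *m J by rewrite -SJJ mulmxA SJu mul1mx.
  by rewrite -mulmxA mulmxBl mul1mx EE subrr mulmx0.
exists (Y + SR^t* *m SJ).
  rewrite -trmxC_unitary; apply/unitarymxP.
  rewrite trmxCK trmxCD (trmxC_mul (SR^t*)) trmxCK mulmxDl !mulmxDr YYE.
  rewrite mulmxA -(trmxC_mul SR Y) SR_Y -!(mulmxA (SJ^t*)) SR_Y.
  rewrite (mulmxA SR) SRu mul1mx SJJ mulmx0 trmx0 map_mx0 mul0mx.
  by rewrite addr0 add0r addrC subrK.
by rewrite mulmxDl YE -mulmxA SJ_E mulmx0 addr0.
Qed.

Lemma square_svd n (A : 'M[C]_n) : exists U V (s : 'rV[C]_n),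
  [/\ U \is unitarymx, V \is unitarymx, forall j, 0 <= s 0 j
     & A = U *m diag_mx s *m V].
Proof.
set V := spectralmx (A^t* *m A); set d := spectral_diag (A^t* *m A).
have Vu : V \is unitarymx := spectral_unitarymx _.
have AAE : A^t* *m A = V^t* *m diag_mx d *m V.
  have /orthomx_spectralP : A^t* *m A \is normalmx.
    by apply/normalmxP; rewrite trmxC_mul trmxCK.
  by rewrite invmx_unitary.
(* The columns of Y are orthogonal with squared norms d; dividing the nonzero
   ones by their norms gives a partial isometry, which is then completed. *)
set Y := A *m V^t*.
have YYE : Y^t* *m Y = diag_mx d.
  rewrite trmxC_mul trmxCK !mulmxA -(mulmxA V) AAE !mulmxA (unitarymxP Vu).
  by rewrite mul1mx mulmxtVK.
have d_ge0 j : 0 <= d 0 j.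
  by have := mul_trmxC_diag_ge0 (Y^t*) j; rewrite trmxCK YYE mxE eqxx mulr1n.
pose s := \row_j sqrtC (d 0 j).
have s_ge0 j : 0 <= s 0 j by rewrite mxE sqrtC_ge0.
have dE j : d 0 j = s 0 j ^+ 2 by rewrite mxE sqrtCK.
clearbody s; pose c := \row_j (s 0 j)^-1.
pose e : 'rV[C]_n := \row_j (s 0 j != 0)%:R.
have PE : orth_proj (diag_mx e).
  split; [rewrite diag_mxM | rewrite [adjmx _]trmxC_diag];
    congr diag_mx; apply/rowP => j; rewrite /e !mxE ?conjC_nat //.
  by case: (s 0 j != 0); rewrite ?mulr1 ?mulr0.
have [U Uu UE] : exists2 U, U \is unitarymx & U *m diag_mx e = Y *m diag_mx c.
  apply: partial_isometry_unitary_ext => //.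
  rewrite trmxC_mul -mulmxA (mulmxA (Y^t*)) YYE trmxC_diag !diag_mxM.
  congr diag_mx; apply/rowP => j; rewrite /e !mxE dE geC0_conj ?invr_ge0 //.
  have [->|s0] := eqVneq (s 0 j) 0; first by rewrite invr0 mul0r.
  by rewrite expr2 mulfK // mulVf.
have YE : Y *m diag_mx e = Y.
  apply/eqP; rewrite -subr_eq0 -{2}[Y]mulmx1 -mulmxBr; apply/eqP.
  apply: gram_mulmx_eq0; rewrite YYE -diag_const_mx -linearB diag_mxM.
  suff -> : \row_j (d 0 j * (e - const_mx 1) 0 j) = 0.
    by apply/matrixP => i k; rewrite !mxE mul0rn.
  apply/rowP => j; rewrite /e !mxE dE.
  by have [->|_] := eqVneq (s 0 j) 0; rewrite ?expr2 ?mul0r // subrr mulr0.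
have es : diag_mx e *m diag_mx s = diag_mx s.
  rewrite diag_mxM; congr diag_mx; apply/rowP => j; rewrite /e !mxE.
  by have [->|_] := eqVneq (s 0 j) 0; rewrite ?mulr0 ?mul1r.
have cs : diag_mx c *m diag_mx s = diag_mx e.
  rewrite diag_mxM; congr diag_mx; apply/rowP => j; rewrite /e !mxE.
  by have [->|s0] := eqVneq (s 0 j) 0; rewrite ?mulr0 ?mulVf.
exists U, V, s; split=> //.
by rewrite -es (mulmxA U) UE -(mulmxA Y) cs YE mulmxKtV.
Qed.

End Isometries.

Section SingularValues.
Variable C : numClosedFieldType.
Variables (n : nat) (A U V : 'M[C]_n) (s : 'rV[C]_n).
Hypotheses (Uu : U \is unitarymx) (Vu : V \is unitarymx).
Hypothesis (As : A = U *m diag_mx s *m V).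

Lemma svd_mxtrace_polar : \tr (A *m (U *m V)^t*) = \sum_j s 0 j.
Proof.
rewrite As trmxC_mul !mulmxA mulmxtVK // mxtrace_mulC mulmxA.
by rewrite unitarymx_trmxC_mul // mul1mx mxtrace_diag.
Qed.

Lemma svd_mul_trmxC :
  A *m A^t* = U *m diag_mx (\row_j `|s 0 j| ^+ 2) *m U^t*.
Proof.
rewrite As !trmxC_mul trmxC_diag !mulmxA mulmxtVK // -(mulmxA U) diag_mxM.
by congr (_ *m diag_mx _ *m _); apply/rowP => j; rewrite !mxE normCK.
Qed.

Lemma svd_mxtrace_gram : \tr (A *m A^t*) = \sum_j `|s 0 j| ^+ 2.
Proof.
rewrite svd_mul_trmxC mxtrace_mulC mulmxA unitarymx_trmxC_mul // mul1mx.
by rewrite mxtrace_diag; apply: eq_bigr => j _; rewrite mxE.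
Qed.

Lemma svd_contraction_le1 m (S : 'M[C]_(n, m)) X j :
  S \is unitarymx -> orth_proj X -> A *m A^t* = S *m X *m S^t* ->
  `|s 0 j| <= 1.
Proof.
move=> Su PX AAE; rewrite -(expr_le1 (n := 2)) //.
have := orth_proj_diag_le (U^t* *m S) j PX.
rewrite trmxC_mul trmxCK !mulmxA mulmxtVK // unitarymx_trmxC_mul //.
rewrite [1%:M _ _]mxE eqxx mulr1n -(mulmxA _ S) -(mulmxA _ (S *m X)) -AAE.
rewrite svd_mul_trmxC !mulmxA unitarymx_trmxC_mul // mul1mx -mulmxA.
rewrite unitarymx_trmxC_mul // mulmx1.
by rewrite mxE eqxx mulr1n mxE.
Qed.

End SingularValues.

Section PolarDistance.
Variable C : numClosedFieldType.

Lemma mxtrace_dist_polar_le m n (F : 'M[C]_(n, m)) (S : 'M[C]_(m, n))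
    (U V : 'M[C]_m) (s : 'rV[C]_m) :
  orth_proj (F *m F^t*) -> S \is unitarymx -> U \is unitarymx ->
  V \is unitarymx -> (forall j, 0 <= s 0 j) -> S *m F = U *m diag_mx s *m V ->
  \tr ((F - S^t* *m (U *m V)) *m (F - S^t* *m (U *m V))^t*) <=
  \tr ((F *m F^t* - S^t* *m S) *m (F *m F^t* - S^t* *m S)^t*).
Proof.
move=> PF Su Uu Vu s_ge0 SF; have [FF Fh] := PF.
have Wu : U *m V \is unitarymx := mul_unitarymx Uu Vu.
have s_le1 j : s 0 j <= 1.
  rewrite -(ger0_norm (s_ge0 j)); apply: (svd_contraction_le1 Uu Vu SF j Su PF).
  by rewrite trmxC_mul !mulmxA.
have trFG : \tr (F *m (S^t* *m (U *m V))^t*) = \sum_j s 0 j.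
  rewrite (trmxC_mul (S^t*)) trmxCK mulmxA mxtrace_mulC mulmxA.
  exact: svd_mxtrace_polar Uu Vu SF.
have trGF : \tr (S^t* *m (U *m V) *m F^t*) = \sum_j s 0 j.
  rewrite -[S^t* *m _]trmxCK -trmxC_mul mxtrace_trmxC trFG rmorph_sum.
  by apply: eq_bigr => j _; exact: geC0_conj.
have trFS : \tr (F *m F^t* *m (S^t* *m S)) = \sum_j s 0 j ^+ 2.
  rewrite mulmxA mxtrace_mulC !mulmxA -(mulmxA (S *m F)) -(trmxC_mul S F).
  rewrite (svd_mxtrace_gram Uu Vu SF); apply: eq_bigr => j _.
  by rewrite ger0_norm.
have GG : S^t* *m (U *m V) *m (S^t* *m (U *m V))^t* = S^t* *m S.
  by rewrite (trmxC_mul (S^t*)) trmxCK mulmxA mulmxtVK.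
have SSh : (S^t* *m S)^t* = S^t* *m S by rewrite trmxC_mul trmxCK.
rewrite !mxtrace_mul_trmxCB trFG trGF GG SSh [(F *m F^t*)^t*]Fh FF.
rewrite (mxtrace_mulC (S^t* *m S)) trFS mulmxA mulmxtVK // lerD2r.
have sum_le : \sum_j s 0 j ^+ 2 <= \sum_j s 0 j.
  by apply: ler_sum => j _; rewrite expr2 ler_piMl.
by apply: lerB => //; apply: lerB.
Qed.

Lemma isometry_dist_proj_le m n (F : 'M[C]_(n, m)) (S : 'M[C]_(m, n)) :
  orth_proj (F *m F^t*) -> S \is unitarymx ->
  exists2 G : 'M[C]_(n, m), G^t* *m G = 1%:M /\ G *m G^t* = S^t* *m S &
    \tr ((F - G) *m (F - G)^t*) <=
    \tr ((F *m F^t* - S^t* *m S) *m (F *m F^t* - S^t* *m S)^t*).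
Proof.
move=> PF Su; have [U [V [s [Uu Vu s_ge0 SF]]]] := square_svd (S *m F).
have Wu : U *m V \is unitarymx := mul_unitarymx Uu Vu.
exists (S^t* *m (U *m V)).
  split; last by rewrite trmxC_mul mulmxA mulmxtVK // trmxCK.
  rewrite trmxC_mul trmxCK mulmxA -(mulmxA _ S) (unitarymxP Su) mulmx1.
  exact: unitarymx_trmxC_mul.
exact: mxtrace_dist_polar_le PF Su Uu Vu s_ge0 SF.
Qed.

End PolarDistance.

Section FramesAsMatrices.
Variable C : numClosedFieldType.

Definition frame_mx N M (f : 'I_N -> 'rV[C]_M) : 'M[C]_(N, M) :=
  \matrix_(i, j) f i 0 j.

Lemma row_frame_mx N M (f : 'I_N -> 'rV[C]_M) i : row i (frame_mx f) = f i.
Proof. by apply/rowP => j; rewrite !mxE. Qed.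

Lemma normsq_row m n (X : 'M[C]_(m, n)) i : normsq (row i X) = (X *m X^t*) i i.
Proof. by rewrite mul_trmxC_diagE; apply: eq_bigr => j _; rewrite mxE. Qed.

Lemma sum_normsq_rowsB m n (f g : 'I_m -> 'rV[C]_n) (X Y : 'M[C]_(m, n)) :
  (forall i, row i X = f i) -> (forall i, row i Y = g i) ->
  \sum_i normsq (f i - g i) = \tr ((X - Y) *m (X - Y)^t*).
Proof.
move=> fX gY; apply: eq_bigr => i _.
by rewrite -fX -gY -normsq_row [in RHS]raddfB.
Qed.

Lemma dotv_row m p n (X : 'M[C]_(m, n)) (Y : 'M[C]_(p, n)) i k :
  dotv (row i X) (row k Y) = (X *m Y^t*) i k.
Proof. by rewrite /dotv mxE; apply: eq_bigr => j _; rewrite !mxE. Qed.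

Lemma analysis_rows m n (f : 'I_m -> 'rV[C]_n) (X : 'M[C]_(m, n)) i :
  (forall k, row k X = f k) -> analysis f (f i) = row i (X *m X^t*).
Proof. by move=> fX; apply/rowP => k; rewrite mxE [RHS]mxE -dotv_row !fX. Qed.

Lemma parseval_frame_row m n (X : 'M[C]_(m, n)) :
  X^t* *m X = 1%:M -> parseval_frame (fun k => row k X).
Proof.
move=> XX x; have -> : normsq x = normsq (row 0 (x *m X^t*)).
  rewrite normsq_row trmxC_mul trmxCK mulmxA -(mulmxA x) XX mulmx1.
  by rewrite mul_trmxC_diagE.
rewrite /normsq; apply: eq_bigr => i _.
by rewrite /dotv !mxE; congr (`|_| ^+ 2); apply: eq_bigr => j _; rewrite !mxE.
Qed.

Lemma equal_norm_row_gram m n p (X : 'M[C]_(m, n)) (Y : 'M[C]_(m, p)) :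
  X *m X^t* = Y *m Y^t* ->
  equal_norm (fun k => row k X) -> equal_norm (fun k => row k Y).
Proof.
by move=> XY eqX i j; have := eqX i j; rewrite /normv !normsq_row XY.
Qed.

Lemma mxapp_stdb N (A : 'M[C]_N) i : mxapp A (stdb C i) = row i A^T.
Proof. by rewrite /mxapp /stdb trmx_mul trmxK rowE. Qed.

End FramesAsMatrices.

Theorem theorem3p4 (C : numClosedFieldType) (N M : nat)
    (P Q : 'M[C]_N) (f : 'I_N -> 'rV[C]_M) (eps : C) :
  orth_proj P -> orth_proj Q -> \rank P = M -> \rank Q = M ->
  parseval_frame f ->
  (forall i, analysis f (f i) = mxapp P (stdb C i)) ->
  \sum_(i < N) normsq (mxapp P (stdb C i) - mxapp Q (stdb C i)) < eps ->
  exists g : 'I_N -> 'rV[C]_M,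
    [/\ parseval_frame g,
        (forall i, analysis g (g i) = mxapp Q (stdb C i)),
        \sum_(i < N) normsq (f i - g i) < 2 * eps
      & equal_norm (fun i => mxapp Q (stdb C i)) -> equal_norm g].
Proof.
move=> PP PQ _ rkQ _ anf PQ_eps; set F := frame_mx f.
have FFP : F *m F^t* = P^T.
  apply/row_matrixP => i; rewrite -mxapp_stdb -anf.
  by rewrite (analysis_rows _ (row_frame_mx f)).
have PF : orth_proj (F *m F^t*) by rewrite FFP; apply: orth_proj_trmx.
have PQt := orth_proj_trmx PQ; have [QQ Qh] := PQt.
have [S Su SSQ] := orth_proj_factor PQt (etrans (mxrank_tr Q) rkQ).
have [G [GG GGQ] dist_le] := isometry_dist_proj_le PF Su.
rewrite SSQ FFP in GGQ dist_le.
exists (fun i => row i G); split.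
- exact: parseval_frame_row.
- by move=> i; rewrite (analysis_rows _ (fun k => erefl)) GGQ mxapp_stdb.
- rewrite (sum_normsq_rowsB (row_frame_mx f) (fun i => erefl)).
  rewrite (sum_normsq_rowsB (fun i => esym (mxapp_stdb P i))
                            (fun i => esym (mxapp_stdb Q i))) in PQ_eps.
  apply: le_lt_trans dist_le (lt_le_trans PQ_eps _).
  rewrite mulr_natl mulr2n lerDl.
  exact: le_trans (mxtrace_mul_trmxC_ge0 _) (ltW PQ_eps).
- move=> eqQ; apply: (equal_norm_row_gram (X := Q^T)).
    by rewrite GGQ [_^t*]Qh QQ.
  by move=> i j; rewrite -!mxapp_stdb; exact: eqQ.
Qed.
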